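(* In any execution of $\mathcal{U}$, suppose that at time $T$ a process $p$ executes line 12 for an operation $o$ and this GCAS returns true, and at a time $T' > T$ a process $p'$ executes line 12 also for $o$, in some iteration of the while loop. Then $p'$ executed line 5 in that same iteration at some time $T_1 < T$.
   Context: Model: an asynchronous shared-memory system with possibly infinitely many processes, any of which may crash, communicating via atomic shared objects. A fetch-and-increment (F\&I) object stores an integer; F\&I$(C)$ atomically returns the current value and increments it. A generalized-compare-and-swap (GCAS) object $O$ stores a value and supports Read$(O)$ and GCAS$(c, O, v_1, v_2)$, which atomically does: if $c(\text{current value of } O, v_1)$ holds then set $O := v_2$ and return true, else return false. Tuples are compared componentwise for $=$; GCAS$(>, A, (t,-,-), v)$ succeeds iff the time field of $A$ is strictly greater than $t$. Implemented type $\mathcal{T} = (OP, RES, Q, \delta)$ with initial state $s_0$; a procedure $apply_{\mathcal{T}}(o,s)$ returns some $(s',r)$ with $(s,o,s',r)\in\delta$. $NULL$ is a value different from every response of $\mathcal{T}$, and $NOOP$ is a name different from every operation of $\mathcal{T}$. Algorithm $\mathcal{U}$: each process $p$ owns a GCAS object $H_p$ with fields $(time, response)$. Shared objects: F\&I object $C$, initially $1$; GCAS object $A$ with fields $(time, op, ptr)$, initially $(0, NOOP, h(NOOP))$, where $h(NOOP)$ is a pointer to an immutable location containing $(0,\perp)$; GCAS object $S$ with fields $(time, state, response, ptr)$, initially $(0, s_0, \perp, h(NOOP))$. Process $p$ performs operation $o$ by calling DoOp$(o)$: (1) DoOp$(o)$ invoked; (2) $t := $ F\&I$(C)$; (3)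 $H_p := (t, NULL)$; (4) while $H_p = (t, NULL)$ do: (5) $(t^*, s^*, r^*, roptr^* ) := S$; (6) GCAS$(=, *roptr^*, (t^*, NULL), (t^*, r^* ))$; (7) GCAS$(>, A, (t,-,-), (t, o, \&H_p))$; (8) $(t', o', roptr') := A$; (9) $(\hat t, \hat r) := *roptr'$; (10) if $(\hat t,\hat r) = (t', NULL)$ then (11) $(s', r') := apply_{\mathcal{T}}(o', s^* )$; (12) GCAS$(=, S, (t^*,s^*,r^*,roptr^* ), (t', s', r', roptr'))$; (13) else GCAS$(=, A, (t', o', roptr'), (t, o, \&H_p))$; end while; (14) return $H_p.response$. Notation: an ''operation'' $o$ means one invocation of DoOp$(o)$ (or the initial $NOOP$). $p(o)$ is the process executing it; $t(o)$ is the value returned by its F\&I at line 2, or $\infty$ if line 2 has not been executed; $h(o)$ is $H_{p(o)}$. For $NOOP$: $t(NOOP)=0$ and $h(NOOP)$ is the immutable location containing $(0,\perp)$. ''Line 12 is executed for $o$'' means the new value written in that GCAS has the form $(t(o), -, r, h(o))$ (equivalently, the process read $(t(o), o, h(o))$ from $A$ at line 8 in that iteration). *)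

(* Operational model of the universal construction U:
   an asynchronous shared-memory system, interleaving semantics,
   every numbered line of DoOp is one atomic step. *)
From Stdlib Require Import Arith Lia.

Set Implicit Arguments.

(* Process identifiers: possibly infinitely many processes. *)
Definition Proc := nat.

(* Response-field values: NULL, the special initial value (bottom),
   or a response of the implemented type. NULL is distinct from every
   response by construction. *)
Inductive rval (RES : Type) : Type :=
| RNull : rval RES
| RBot  : rval RES
| RVal  : RES -> rval RES.
Arguments RNull {RES}. Arguments RBot {RES}.

Inductive opv (OP : Type) : Type :=
| NoOp : opv OP
| Op   : OP -> opv OP.
Arguments NoOp {OP}.

(* Pointers to response locations: h(NOOP) (immutable, contains (0,bot))
   or &H_p for a process p. *)
Inductive ptr : Type :=
| PNoop : ptr
| PH    : Proc -> ptr.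

(* Program counter: the line about to be executed.  L1 = idle, i.e. the
   next step is the invocation of a new DoOp. *)
Inductive line : Type :=
| L1 | L2 | L3 | L4 | L5 | L6 | L7 | L8 | L9 | L10 | L11 | L12 | L13 | L14.

Section Model.
Variables (OP RES Q : Type).

Record local : Type := mkLocal {
  pc   : line;
  inv  : nat;          (* number of DoOp invocations so far (line 1 steps) *)
  lo   : opv OP;       (* the argument o of the current DoOp *)
  lt   : nat;
  lts  : nat;
  lss  : Q;
  lrs  : rval RES;
  lps  : ptr;
  lt'  : nat;
  lo'  : opv OP;
  lp'  : ptr;
  lth  : nat;
  lrh  : rval RES;
  lsn  : Q;
  lrn  : rval RES
}.

Record config : Type := mkConfig {
  CC : nat;                              (* F&I object C *)
  AA : nat * opv OP * ptr;               (* GCAS object A: (time, op, ptr) *)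
  SS : nat * Q * rval RES * ptr;         (* GCAS object S: (time, state, response, ptr) *)
  HH : Proc -> nat * rval RES;           (* GCAS objects H_p: (time, response) *)
  LL : Proc -> local
}.

Definition deref (c : config) (x : ptr) : nat * rval RES :=
  match x with
  | PNoop => (0, RBot)
  | PH q => HH c q
  end.

Definition upd {X : Type} (f : Proc -> X) (p : Proc) (v : X) : Proc -> X :=
  fun q => if Nat.eqb q p then v else f q.

Definition setL (c : config) (p : Proc) (l : local) : config :=
  mkConfig (CC c) (AA c) (SS c) (HH c) (upd (LL c) p l).

Definition setPc (l : local) (n : line) : local :=
  mkLocal n (inv l) (lo l) (lt l) (lts l) (lss l) (lrs l) (lps l)
          (lt' l) (lo' l) (lp' l) (lth l) (lrh l) (lsn l) (lrn l).

(* One atomic step of process p, transforming configuration c into c'.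
   [apply] is the sequential procedure apply_T. *)
Inductive step (apply : OP -> Q -> Q * RES) (p : Proc) (c c' : config) : Prop :=
| st1 : forall o : OP, pc (LL c p) = L1 ->
    (* (1) DoOp(o) invoked *)
    c' = setL c p (let l := LL c p in
           mkLocal L2 (S (inv l)) (Op o) (lt l) (lts l) (lss l) (lrs l) (lps l)
                   (lt' l) (lo' l) (lp' l) (lth l) (lrh l) (lsn l) (lrn l)) ->
    step apply p c c'
| st2 : pc (LL c p) = L2 ->
    (* (2) t := F&I(C) *)
    c' = mkConfig (S (CC c)) (AA c) (SS c) (HH c)
           (upd (LL c) p (let l := LL c p in
              mkLocal L3 (inv l) (lo l) (CC c) (lts l) (lss l) (lrs l) (lps l)
                      (lt' l) (lo' l) (lp' l) (lth l) (lrh l) (lsn l) (lrn l))) ->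
    step apply p c c'
| st3 : pc (LL c p) = L3 ->
    (* (3) H_p := (t, NULL) *)
    c' = mkConfig (CC c) (AA c) (SS c) (upd (HH c) p (lt (LL c p), RNull))
           (upd (LL c) p (setPc (LL c p) L4)) ->
    step apply p c c'
| st4_loop : pc (LL c p) = L4 -> HH c p = (lt (LL c p), RNull) ->
    (* (4) while test true *)
    c' = setL c p (setPc (LL c p) L5) -> step apply p c c'
| st4_exit : pc (LL c p) = L4 -> HH c p <> (lt (LL c p), RNull) ->
    (* (4) while test false *)
    c' = setL c p (setPc (LL c p) L14) -> step apply p c c'
| st5 : pc (LL c p) = L5 ->
    (* (5) (t_star, s_star, r_star, roptr_star) := S *)
    c' = setL c p (let l := LL c p in
           match SS c with (ts, ss, rs, ps) =>
             mkLocal L6 (inv l) (lo l) (lt l) ts ss rs ps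
                     (lt' l) (lo' l) (lp' l) (lth l) (lrh l) (lsn l) (lrn l)
           end) ->
    step apply p c c'
| st6_succ : forall q, pc (LL c p) = L6 -> lps (LL c p) = PH q ->
    HH c q = (lts (LL c p), RNull) ->
    (* (6) GCAS(=, deref roptr_star, (t_star,NULL), (t_star,r_star)) succeeds *)
    c' = mkConfig (CC c) (AA c) (SS c)
           (upd (HH c) q (lts (LL c p), lrs (LL c p)))
           (upd (LL c) p (setPc (LL c p) L7)) ->
    step apply p c c'
| st6_fail : pc (LL c p) = L6 ->
    deref c (lps (LL c p)) <> (lts (LL c p), RNull) ->
    (* (6) GCAS fails (always the case for the immutable location h(NOOP)) *)
    c' = setL c p (setPc (LL c p) L7) -> step apply p c c'
| st7_succ : pc (LL c p) = L7 -> fst (fst (AA c)) > lt (LL c p) ->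
    (* (7) GCAS(>, A, (t,-,-), (t, o, &H_p)) succeeds *)
    c' = mkConfig (CC c) (lt (LL c p), lo (LL c p), PH p) (SS c) (HH c)
           (upd (LL c) p (setPc (LL c p) L8)) ->
    step apply p c c'
| st7_fail : pc (LL c p) = L7 -> ~ (fst (fst (AA c)) > lt (LL c p)) ->
    c' = setL c p (setPc (LL c p) L8) -> step apply p c c'
| st8 : pc (LL c p) = L8 ->
    (* (8) (t', o', roptr') := A *)
    c' = setL c p (let l := LL c p in
           match AA c with (t', o', p') =>
             mkLocal L9 (inv l) (lo l) (lt l) (lts l) (lss l) (lrs l) (lps l)
                     t' o' p' (lth l) (lrh l) (lsn l) (lrn l)
           end) ->
    step apply p c c'
| st9 : pc (LL c p) = L9 ->
    (* (9) (t-hat, r-hat) := deref roptr' *)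
    c' = setL c p (let l := LL c p in
           match deref c (lp' l) with (th, rh) =>
             mkLocal L10 (inv l) (lo l) (lt l) (lts l) (lss l) (lrs l) (lps l)
                     (lt' l) (lo' l) (lp' l) th rh (lsn l) (lrn l)
           end) ->
    step apply p c c'
| st10_then : pc (LL c p) = L10 ->
    (lth (LL c p), lrh (LL c p)) = (lt' (LL c p), RNull) ->
    c' = setL c p (setPc (LL c p) L11) -> step apply p c c'
| st10_else : pc (LL c p) = L10 ->
    (lth (LL c p), lrh (LL c p)) <> (lt' (LL c p), RNull) ->
    c' = setL c p (setPc (LL c p) L13) -> step apply p c c'
| st11 : forall o', pc (LL c p) = L11 -> lo' (LL c p) = Op o' ->
    (* (11) (s', r') := apply_T(o', s_star) *)
    c' = setL c p (let l := LL c p in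
           mkLocal L12 (inv l) (lo l) (lt l) (lts l) (lss l) (lrs l) (lps l)
                   (lt' l) (lo' l) (lp' l) (lth l) (lrh l)
                   (fst (apply o' (lss l))) (RVal (snd (apply o' (lss l))))) ->
    step apply p c c'
| st12_succ : pc (LL c p) = L12 ->
    (let l := LL c p in SS c = (lts l, lss l, lrs l, lps l)) ->
    (* (12) GCAS(=, S, (t_star,s_star,r_star,roptr_star), (t', s', r', roptr')) succeeds *)
    c' = mkConfig (CC c) (AA c)
           (let l := LL c p in (lt' l, lsn l, lrn l, lp' l)) (HH c)
           (upd (LL c) p (setPc (LL c p) L4)) ->
    step apply p c c'
| st12_fail : pc (LL c p) = L12 ->
    (let l := LL c p in SS c <> (lts l, lss l, lrs l, lps l)) ->
    c' = setL c p (setPc (LL c p) L4) -> step apply p c c'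
| st13_succ : pc (LL c p) = L13 ->
    (let l := LL c p in AA c = (lt' l, lo' l, lp' l)) ->
    (* (13) GCAS(=, A, (t', o', roptr'), (t, o, &H_p)) succeeds *)
    c' = mkConfig (CC c) (lt (LL c p), lo (LL c p), PH p) (SS c) (HH c)
           (upd (LL c) p (setPc (LL c p) L4)) ->
    step apply p c c'
| st13_fail : pc (LL c p) = L13 ->
    (let l := LL c p in AA c <> (lt' l, lo' l, lp' l)) ->
    c' = setL c p (setPc (LL c p) L4) -> step apply p c c'
| st14 : pc (LL c p) = L14 ->
    (* (14) return H_p.response; the process becomes idle *)
    c' = setL c p (setPc (LL c p) L1) -> step apply p c c'.

(* Initial configuration.  The initial contents H0 of the H_p are left
   unspecified, as are the initial values of local variables (l0). *)
Definition init_config (s0 : Q) (H0 : Proc -> nat * rval RES)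
    (l0 : Proc -> local) : config :=
  mkConfig 1 (0, NoOp, PNoop) (0, s0, RBot, PNoop) H0 l0.

(* An execution: a sequence of configurations e 0, e 1, ... and a schedule;
   at time n either process p takes one atomic step (who n = Some p) or
   nothing happens (who n = None; this allows finite executions and
   crashes, a crashed process simply never being scheduled again). *)
Definition execution (apply : OP -> Q -> Q * RES) (s0 : Q)
    (e : nat -> config) (who : nat -> option Proc) : Prop :=
  (exists H0 l0, e 0 = init_config s0 H0 l0 /\ forall p, pc (l0 p) = L1)
  /\ forall n, match who n with
               | Some p => step apply p (e n) (e (S n))
               | None => e (S n) = e n
               end.

(* Operations: the initial NOOP, or the k-th invocation of DoOp by p. *)
Inductive operation : Type :=
| OpNoop : operation
| OpInv  : Proc -> nat -> operation.

(* t(o) = t : the F&I at line 2 of operation o returned t (t(NOOP) = 0).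
   If line 2 was never executed for o, t(o) is infinity, and no t
   satisfies this predicate. *)
Definition t_of (e : nat -> config) (who : nat -> option Proc)
    (o : operation) (t : nat) : Prop :=
  match o with
  | OpNoop => t = 0
  | OpInv p k => exists n, who n = Some p /\ pc (LL (e n) p) = L2
                           /\ inv (LL (e n) p) = k /\ CC (e n) = t
  end.

Definition h_of (o : operation) : ptr :=
  match o with OpNoop => PNoop | OpInv p _ => PH p end.

(* At time n, process p executes line 12 for o: the new value written
   by that GCAS has the form (t(o), -, -, h(o)). *)
Definition exec_line12_for e who (n : nat) (p : Proc) (o : operation) : Prop :=
  who n = Some p /\ pc (LL (e n) p) = L12 /\
  t_of e who o (lt' (LL (e n) p)) /\ lp' (LL (e n) p) = h_of o.

(* ... and that GCAS returns true *)
Definition line12_succeeds (e : nat -> config) (n : nat) (p : Proc) : Prop :=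
  let l := LL (e n) p in SS (e n) = (lts l, lss l, lrs l, lps l).

Definition exec_line5 (e : nat -> config) who (n : nat) (p : Proc) : Prop :=
  who n = Some p /\ pc (LL (e n) p) = L5.

End Model.

From Stdlib Require Import Arith Lia Classical.

(* Let v = (t(o), s, r, h(o)) be the value written into S at time T.  If p' read S at
   line 5 after T, then before its line 9 some process executed line 6 with (t(o), h(o)):
   p' itself if it still read v, otherwise the iteration whose line 12 overwrote v, since
   that line-12 GCAS compared S with its own line-5 snapshot.  This line-6 GCAS leaves a
   non-NULL response in h(o), and h(o) never holds (t(o), NULL) again, because its owner
   only writes NULL together with fresh, strictly larger timestamps.  So p' cannot read
   (t(o), NULL) at line 9, which it must have done to reach line 12 for o. *)

Lemma first_change {X : Type} (f : nat -> X) a b : a <= b ->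
  f b = f a \/ exists c, a <= c < b /\ f c = f a /\ f (S c) <> f c.
Proof.
  induction 1 as [|m Ham [IH|[c [Hc [Hfc Hch]]]]]; [now left| |].
  - destruct (classic (f (S m) = f m)) as [E|E]; [left; congruence|].
    right; exists m; repeat split; auto; lia.
  - right; exists c; repeat split; auto; lia.
Qed.

Section Execution.
Context {OP RES Q : Type} {apply : OP -> Q -> Q * RES} {s0 : Q}
  {e : nat -> config OP RES Q} {who : nat -> option Proc}.
Hypothesis Hexec : execution apply s0 e who.

Lemma scheduled_step n p : who n = Some p -> step apply p (e n) (e (S n)).
Proof. intro Hw. generalize (proj2 Hexec n). now rewrite Hw. Qed.

Lemma who_dec n r : who n = Some r \/ who n <> Some r.
Proof.
  destruct (who n) as [p|]; [|right; discriminate].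
  destruct (Nat.eq_dec p r); [left|right]; congruence.
Qed.

Ltac rewrite_next n := match goal with H : e (S n) = _ |- _ => rewrite H end.

Lemma LL_unscheduled n r : who n <> Some r -> LL (e (S n)) r = LL (e n) r.
Proof.
  intro Hne. generalize (proj2 Hexec n).
  destruct (who n) as [p|] eqn:Hw; [|now intros ->].
  assert (Hrp : (r =? p) = false) by (apply Nat.eqb_neq; congruence).
  intro Hs; destruct Hs; rewrite_next n; unfold setL, upd; simpl; now rewrite Hrp.
Qed.

Lemma pc_init r : pc (LL (e 0) r) = L1.
Proof. destruct Hexec as [[H0 [l0 [-> Hl]]] _]. apply Hl. Qed.

Lemma last_step_before n r : pc (LL (e n) r) <> L1 ->
  exists m, m < n /\ who m = Some r /\ step apply r (e m) (e (S m)) /\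
    LL (e (S m)) r = LL (e n) r /\ forall k, m < k < n -> who k <> Some r.
Proof.
  induction n as [|n IH]; intro Hpc; [now rewrite pc_init in Hpc|].
  destruct (who_dec n r) as [Hw|Hw].
  - exists n; repeat split; auto using scheduled_step; lia.
  - rewrite (LL_unscheduled n r Hw) in Hpc |- *.
    destruct (IH Hpc) as [m [Hm [Hwm [Hs [Heq Hgap]]]]].
    exists m; repeat split; auto.
    intros k Hk; destruct (Nat.eq_dec k n); [congruence|apply Hgap; lia].
Qed.

Ltac destruct_pairs := repeat match goal with
  | |- context [match ?x with pair _ _ => _ end] => let E := fresh "E" in destruct x eqn:E
  end.
Ltac unfold_step n :=
  rewrite_next n; unfold setL, upd; simpl; rewrite ?Nat.eqb_refl; simpl; destruct_pairs; simpl.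

Lemma CC_monotone a b : a <= b -> CC (e a) <= CC (e b).
Proof.
  induction 1 as [|m _ IH]; [lia|].
  enough (CC (e m) <= CC (e (S m))) by lia.
  generalize (proj2 Hexec m); destruct (who m) as [p|].
  - intro Hs; destruct Hs; rewrite_next m; simpl; lia.
  - intros ->; lia.
Qed.

Lemma inv_monotone a b r : a <= b -> inv (LL (e a) r) <= inv (LL (e b) r).
Proof.
  induction 1 as [|m _ IH]; [lia|].
  enough (inv (LL (e m) r) <= inv (LL (e (S m)) r)) by lia.
  destruct (who_dec m r) as [Hw|Hw].
  - destruct (scheduled_step m r Hw); unfold_step m; lia.
  - rewrite (LL_unscheduled m r Hw); lia.
Qed.

Definition after_line2 (l : line) : Prop := match l with L1 | L2 => False | _ => True end.
Definition after_line3 (l : line) : Prop := match l with L1 | L2 | L3 => False | _ => True end.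
Definition in_lines_9_12 (l : line) : Prop :=
  match l with L9 | L10 | L11 | L12 => True | _ => False end.

Ltac by_current_pc := match goal with Hpc : pc (LL (e _) _) = _ |- _ => rewrite Hpc end; exact I.

Lemma lt_lt_CC n r : after_line2 (pc (LL (e n) r)) -> lt (LL (e n) r) < CC (e n).
Proof.
  induction n as [|n IH]; [now rewrite pc_init|].
  destruct (who_dec n r) as [Hw|Hw].
  - destruct (scheduled_step n r Hw); unfold_step n; intro Hp; simpl in Hp;
      try tauto; try lia; generalize (IH ltac:(by_current_pc)); lia.
  - rewrite (LL_unscheduled n r Hw). intro Hp.
    generalize (IH Hp) (CC_monotone n (S n) ltac:(lia)); lia.
Qed.

Definition announced (t : nat) (q : Proc) (n : nat) : Prop :=
  exists m, m < n /\ who m = Some q /\ pc (LL (e m) q) = L3 /\ lt (LL (e m) q) = t.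

Lemma announced_S t q n : announced t q n -> announced t q (S n).
Proof. intros [m Hm]. exists m. intuition lia. Qed.

Lemma lt_announced n r : after_line3 (pc (LL (e n) r)) -> announced (lt (LL (e n) r)) r n.
Proof.
  induction n as [|n IH]; [now rewrite pc_init|].
  destruct (who_dec n r) as [Hw|Hw].
  - destruct (scheduled_step n r Hw); unfold_step n; intro Hp; simpl in Hp; try tauto;
      try (apply announced_S, IH; by_current_pc).
    exists n; auto.
  - rewrite (LL_unscheduled n r Hw). intro Hp. apply announced_S, IH, Hp.
Qed.

Lemma AA_announced n t o q : AA (e n) = (t, o, PH q) -> announced t q n.
Proof.
  revert t o q; induction n as [|n IH]; intros t o q.
  { destruct Hexec as [[H0 [l0 [-> _]]] _]. discriminate. }
  generalize (proj2 Hexec n); destruct (who n) as [p|].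
  - intro Hs; destruct Hs; rewrite_next n; simpl; intro HA;
      try (apply announced_S; eapply IH; exact HA);
      injection HA as <- _ <-; apply announced_S, lt_announced; by_current_pc.
  - intros ->; intro HA; eapply announced_S, IH; eauto.
Qed.

Lemma lp'_announced n r q : in_lines_9_12 (pc (LL (e n) r)) -> lp' (LL (e n) r) = PH q ->
  announced (lt' (LL (e n) r)) q n.
Proof.
  induction n as [|n IH]; [now rewrite pc_init|].
  destruct (who_dec n r) as [Hw|Hw].
  - destruct (scheduled_step n r Hw); unfold_step n; intros Hp Hq; simpl in Hp; try tauto;
      try (apply announced_S, IH; [by_current_pc|exact Hq]).
    subst. apply announced_S. eapply AA_announced; eassumption.
  - rewrite (LL_unscheduled n r Hw). intros Hp Hq. apply announced_S; auto.
Qed.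

Lemma SS_announced n t s v q : SS (e n) = (t, s, v, PH q) -> announced t q n.
Proof.
  revert t s v q; induction n as [|n IH]; intros t s v q.
  { destruct Hexec as [[H0 [l0 [-> _]]] _]. discriminate. }
  generalize (proj2 Hexec n); destruct (who n) as [p|].
  - intro Hs; destruct Hs; rewrite_next n; simpl; intro HS;
      try (apply announced_S; eapply IH; exact HS).
    injection HS as <- _ _ Hq. apply announced_S, lp'_announced; [by_current_pc|exact Hq].
  - intros ->; intro HS; eapply announced_S, IH; eauto.
Qed.

Lemma lps_announced n r q : pc (LL (e n) r) = L6 -> lps (LL (e n) r) = PH q ->
  announced (lts (LL (e n) r)) q n.
Proof.
  induction n as [|n IH]; [now rewrite pc_init|].
  destruct (who_dec n r) as [Hw|Hw].
  - destruct (scheduled_step n r Hw); unfold_step n; intros Hp Hq; try discriminate.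
    subst. apply announced_S. eapply SS_announced; eassumption.
  - rewrite (LL_unscheduled n r Hw). intros Hp Hq. apply announced_S; auto.
Qed.

Lemma responses_not_null n : snd (fst (SS (e n))) <> RNull /\
  forall r, (pc (LL (e n) r) = L6 -> lrs (LL (e n) r) <> RNull) /\
            (pc (LL (e n) r) = L12 -> lrn (LL (e n) r) <> RNull).
Proof.
  induction n as [|n [IS IL]].
  { destruct Hexec as [[H0 [l0 [-> Hl]]] _]. simpl. split; [discriminate|].
    intro r. rewrite Hl. split; discriminate. }
  split.
  - generalize (proj2 Hexec n); destruct (who n) as [p|].
    + intro Hs; destruct Hs; rewrite_next n; simpl; auto. apply (IL p); auto.
    + now intros ->.
  - intro r. destruct (who_dec n r) as [Hw|Hw].
    + destruct (scheduled_step n r Hw); unfold_step n; split; intro Hp;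
        try discriminate; try (apply (IL r); assumption).
      exact IS.
    + rewrite (LL_unscheduled n r Hw). apply IL.
Qed.

Ltac destruct_pairs_in H := repeat match type of H with
  | context [match ?x with pair _ _ => _ end] => let E := fresh "E" in destruct x eqn:E
  end; simpl in H.
Ltac unfold_step_in m H := match goal with Hm : e (S m) = _ |- _ => rewrite Hm in H end;
  unfold setL, upd in H; simpl in H; rewrite ?Nat.eqb_refl in H; simpl in H; destruct_pairs_in H.

Lemma HH_write_cases n p q : who n = Some p ->
  HH (e (S n)) q = HH (e n) q \/
  (p = q /\ pc (LL (e n) p) = L3 /\ HH (e (S n)) q = (lt (LL (e n) p), RNull)) \/
  (pc (LL (e n) p) = L6 /\ HH (e (S n)) q = (lts (LL (e n) p), lrs (LL (e n) p))).
Proof.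
  intro Hw. destruct (scheduled_step n p Hw); rewrite_next n; simpl; auto;
    unfold upd; destruct (q =? _) eqn:Eq; auto; apply Nat.eqb_eq in Eq; subst; auto.
Qed.

Lemma line3_timestamp_increases m k q : who m = Some q -> pc (LL (e m) q) = L3 ->
  pc (LL (e k) q) = L3 -> m < k -> lt (LL (e m) q) < lt (LL (e k) q).
Proof.
  intros Hw Hpm Hpk Hmk.
  destruct (last_step_before k q) as [l [Hl [Hwl [Hs [Heq Hgap]]]]]; [congruence|].
  assert (m <= l) by (destruct (Nat.le_gt_cases m l); auto; exfalso; apply (Hgap m); auto).
  destruct Hs; unfold_step_in l Heq; rewrite <- Heq in Hpk |- *; simpl in Hpk |- *;
    try discriminate.
  assert (m <> l) by (intros ->; congruence).
  generalize (lt_lt_CC m q ltac:(now rewrite Hpm)) (CC_monotone m l ltac:(lia)). lia.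
Qed.

Lemma HH_not_reset t q m : announced t q m -> HH (e m) q <> (t, RNull) ->
  forall k, m <= k -> HH (e k) q <> (t, RNull).
Proof.
  intros [m3 [Hm3 [Hw3 [Hp3 Ht3]]]] Hm k.
  induction 1 as [|k Hmk IH]; [exact Hm|].
  generalize (proj2 Hexec k); destruct (who k) as [p|] eqn:Hw; [|now intros ->].
  intros _; destruct (HH_write_cases k p q Hw) as [E|[[<- [Hp3k E]]|[Hp6 E]]]; rewrite E.
  - exact IH.
  - generalize (line3_timestamp_increases m3 k p Hw3 Hp3 Hp3k ltac:(lia)).
    intros Hlt [= Ht]; lia.
  - generalize (proj1 (proj2 (responses_not_null k) p) Hp6). congruence.
Qed.

Definition line6_on (n t : nat) (q : Proc) : Prop :=
  exists r, who n = Some r /\ pc (LL (e n) r) = L6 /\ lts (LL (e n) r) = t /\ lps (LL (e n) r) = PH q.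

Lemma line6_clears_HH n t q : line6_on n t q -> forall k, n < k -> HH (e k) q <> (t, RNull).
Proof.
  intros [r [Hw [Hp6 [<- Hq]]]] k Hk.
  apply (HH_not_reset _ q (S n)); [apply announced_S, lps_announced; auto| |lia].
  generalize (proj1 (proj2 (responses_not_null n) r) Hp6).
  destruct (scheduled_step n r Hw); try congruence; rewrite_next n; simpl; rewrite Hq in *.
  - unfold upd. assert (q0 = q) as -> by congruence. rewrite Nat.eqb_refl. congruence.
  - simpl in *. congruence.
Qed.

Definition S_snapshot (l : local OP RES Q) : nat * Q * rval RES * ptr :=
  (lts l, lss l, lrs l, lps l).

Definition no_line5_between (a b : nat) (r : Proc) : Prop :=
  forall k, a < k < b -> ~ exec_line5 e who k r.

Lemma no_line5_idle a b r : (forall k, a < k < b -> who k <> Some r) -> no_line5_between a b r.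
Proof. intros Hgap k Hk [Hw _]. exact (Hgap k Hk Hw). Qed.

Lemma no_line5_concat a b c r : no_line5_between a b r -> pc (LL (e b) r) <> L5 ->
  no_line5_between b c r -> no_line5_between a c r.
Proof.
  intros Hab Hb Hbc k Hk Hl5.
  destruct (lt_eq_lt_dec k b) as [[Hkb| ->]|Hbk].
  - apply (Hab k); auto; lia.
  - apply Hb, Hl5.
  - apply (Hbc k); auto; lia.
Qed.

Ltac step_back n r m Hpc Hpm Heq Hgap :=
  let Hm := fresh "Hm" in let Hw := fresh "Hw" in let Hs := fresh "Hs" in
  let Hc := fresh "Hc" in
  destruct (last_step_before n r) as [m [Hm [Hw [Hs [Heq Hgap]]]]]; [rewrite Hpc; discriminate|];
  pose proof Hpc as Hc;
  destruct Hs; unfold_step_in m Heq; rewrite <- Heq in Hc |- *; simpl in Hc |- *;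
  try discriminate; clear Hc;
  match goal with Hp : pc (LL (e m) r) = _ |- _ => rename Hp into Hpm end.

Lemma line9_history n r : pc (LL (e n) r) = L9 ->
  exists m5 m6, m5 < m6 < n /\ exec_line5 e who m5 r /\ SS (e m5) = S_snapshot (LL (e n) r) /\
    who m6 = Some r /\ pc (LL (e m6) r) = L6 /\
    lts (LL (e m6) r) = lts (LL (e n) r) /\ lps (LL (e m6) r) = lps (LL (e n) r) /\
    no_line5_between m5 n r.
Proof.
  intro Hp9. unfold S_snapshot.
  step_back n r m8 Hp9 Hp8 Heq8 Hgap8.
  step_back m8 r m7 Hp8 Hp7 Heq7 Hgap7;
  step_back m7 r m6 Hp7 Hp6 Heq6 Hgap6;
  step_back m6 r m5 Hp6 Hp5 Heq5 Hgap5;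
  exists m5, m6; rewrite <- Heq5; simpl; repeat split; auto; try lia.
  all: apply (no_line5_concat _ m6); [apply no_line5_idle; auto|congruence|].
  all: apply (no_line5_concat _ m7); [apply no_line5_idle; auto|congruence|].
  all: apply (no_line5_concat _ m8); [apply no_line5_idle; auto|congruence|].
  all: apply no_line5_idle; auto.
Qed.

Lemma line12_history n r : pc (LL (e n) r) = L12 ->
  exists m5 m6 m9, m5 < m6 < m9 /\ m9 < n /\
    exec_line5 e who m5 r /\ SS (e m5) = S_snapshot (LL (e n) r) /\
    who m6 = Some r /\ pc (LL (e m6) r) = L6 /\
    lts (LL (e m6) r) = lts (LL (e n) r) /\ lps (LL (e m6) r) = lps (LL (e n) r) /\
    deref (e m9) (lp' (LL (e n) r)) = (lt' (LL (e n) r), RNull) /\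
    no_line5_between m5 n r.
Proof.
  intro Hp12.
  step_back n r m11 Hp12 Hp11 Heq11 Hgap11.
  step_back m11 r m10 Hp11 Hp10 Heq10 Hgap10.
  match goal with H : (lth _, lrh _) = _ |- _ => rename H into Hnull end.
  step_back m10 r m9 Hp10 Hp9 Heq9 Hgap9.
  rewrite <- Heq9 in Hnull; simpl in Hnull.
  destruct (line9_history m9 r Hp9)
    as [m5 [m6 [Hm56 [Hl5 [HS5 [Hw6 [Hp6 [Hts6 [Hps6 Hno5]]]]]]]]].
  exists m5, m6, m9. repeat split; try apply Hl5; auto; try lia; try congruence.
  apply (no_line5_concat _ m9); [auto|congruence|].
  apply (no_line5_concat _ m10); [apply no_line5_idle; auto|congruence|].
  apply (no_line5_concat _ m11); [apply no_line5_idle; auto|congruence|].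
  apply no_line5_idle; auto.
Qed.

Lemma SS_changed_by_line12 n : SS (e (S n)) <> SS (e n) ->
  exists p, who n = Some p /\ pc (LL (e n) p) = L12 /\ SS (e n) = S_snapshot (LL (e n) p).
Proof.
  generalize (proj2 Hexec n); destruct (who n) as [p|]; [|intros ->; tauto].
  intro Hs; destruct Hs; rewrite_next n; simpl; try tauto.
  intros _; exists p; auto.
Qed.

Lemma line12_success_value n p : who n = Some p -> pc (LL (e n) p) = L12 ->
  line12_succeeds e n p ->
  SS (e (S n)) = (lt' (LL (e n) p), lsn (LL (e n) p), lrn (LL (e n) p), lp' (LL (e n) p)).
Proof.
  intros Hw Hp Hsucc. unfold line12_succeeds in Hsucc.
  destruct (scheduled_step n p Hw); try congruence. now rewrite_next n.
Qed.

Lemma SS_overwritten_after_line6 a b t s v q : SS (e a) = (t, s, v, PH q) -> a <= b ->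
  SS (e b) <> SS (e a) -> exists n6, n6 < b /\ line6_on n6 t q.
Proof.
  intros Ha Hab Hb.
  destruct (first_change (fun n => SS (e n)) a b Hab) as [E|[c [Hc [Hca Hch]]]]; [tauto|].
  destruct (SS_changed_by_line12 c Hch) as [p [Hw [Hp12 Hsnap]]].
  destruct (line12_history c p Hp12)
    as [m5 [m6 [m9 [Hm [Hm9 [_ [_ [Hw6 [Hp6 [Hts6 [Hps6 _]]]]]]]]]]].
  rewrite Hca, Ha in Hsnap. unfold S_snapshot in Hsnap. injection Hsnap as -> _ _ Hq.
  exists m6; split; [lia|]. exists p; repeat split; congruence.
Qed.

Lemma t_of_unique o t1 t2 : t_of e who o t1 -> t_of e who o t2 -> t1 = t2.
Proof.
  assert (Hkey : forall q k n1 n2, n1 < n2 -> who n1 = Some q -> pc (LL (e n1) q) = L2 ->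
     inv (LL (e n1) q) = k -> pc (LL (e n2) q) = L2 -> inv (LL (e n2) q) <> k).
  { intros q k n1 n2 Hlt Hw1 Hp1 Hi1 Hp2.
    destruct (last_step_before n2 q) as [m [Hm [Hw [Hs [Heq Hgap]]]]]; [congruence|].
    assert (n1 <= m) by (destruct (Nat.le_gt_cases n1 m); auto; exfalso; apply (Hgap n1); auto).
    destruct Hs; unfold_step_in m Heq; rewrite <- Heq in Hp2 |- *; simpl in Hp2 |- *;
      try discriminate.
    assert (n1 <> m) by (intros ->; congruence).
    generalize (inv_monotone n1 m q ltac:(lia)). lia. }
  destruct o as [|q k]; simpl; [congruence|].
  intros [n1 [Hw1 [Hp1 [Hi1 <-]]]] [n2 [Hw2 [Hp2 [Hi2 <-]]]].
  destruct (lt_eq_lt_dec n1 n2) as [[Hlt| ->]|Hlt]; auto; exfalso.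
  - exact (Hkey q k n1 n2 Hlt Hw1 Hp1 Hi1 Hp2 Hi2).
  - exact (Hkey q k n2 n1 Hlt Hw2 Hp2 Hi2 Hp1 Hi1).
Qed.

End Execution.

Theorem mainTheorem11
  (OP RES Q : Type) (delta : Q -> OP -> Q -> RES -> Prop) (s0 : Q)
  (apply : OP -> Q -> Q * RES)
  (apply_spec : forall o s, delta s o (fst (apply o s)) (snd (apply o s)))
  (e : nat -> config OP RES Q) (who : nat -> option Proc)
  (Hexec : execution apply s0 e who)
  (o : operation) (p p' : Proc) (T T' : nat)
  (H12 : exec_line12_for e who T p o) (Hsucc : line12_succeeds e T p)
  (HTT' : T < T')
  (H12' : exec_line12_for e who T' p' o) :
  exists T1, T1 < T /\ exec_line5 e who T1 p' /\
    (* line 5 at T1 belongs to the same iteration as line 12 at T':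
       p' executes no other line-5 step between T1 and T' *)
    forall n, T1 < n < T' -> ~ exec_line5 e who n p'.
Proof.
  destruct H12 as [Hw [Hp [Ht Hh]]], H12' as [Hw' [Hp' [Ht' Hh']]].
  destruct (line12_history Hexec T' p' Hp')
    as [m5 [m6 [m9 [Hm [Hm9 [Hl5 [HS5 [Hw6 [Hp6 [Hts6 [Hps6 [Hd9 Hno5]]]]]]]]]]]].
  destruct o as [|q k]; [rewrite Hh' in Hd9; discriminate|]; simpl in Hh, Hh'.
  rewrite Hh', (t_of_unique Hexec _ _ _ Ht' Ht) in Hd9.
  exists m5; split; [|split; [exact Hl5|exact Hno5]].
  destruct (Nat.lt_ge_cases m5 T) as [|HT]; [assumption|exfalso].
  assert (m5 <> T) by (intros ->; destruct Hl5 as [Hw5 Hp5]; congruence).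
  pose proof (line12_success_value Hexec T p Hw Hp Hsucc) as HS; rewrite Hh in HS.
  destruct (classic (SS (e m5) = SS (e (S T)))) as [E|E].
  - rewrite HS, HS5 in E. unfold S_snapshot in E. injection E as Hts _ _ Hps.
    refine (line6_clears_HH Hexec m6 _ q _ m9 ltac:(lia) Hd9).
    exists p'; repeat split; congruence.
  - destruct (SS_overwritten_after_line6 Hexec _ m5 _ _ _ _ HS ltac:(lia) E) as [n6 [Hn6 H6]].
    exact (line6_clears_HH Hexec n6 _ q H6 m9 ltac:(lia) Hd9).
Qed.
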